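(* Consider an episodic process with $K$ episodes, horizon $H$, finite state space $\mathcal S$ ($|\mathcal S|=S$) and finite action sets $\mathcal A,\mathcal B$ ($|\mathcal A|=A$, $|\mathcal B|=B$), with $T=KH$ and $S,A,B,T\ge 2$. In episode $k$ and step $h$ a triple $(s_h^k,a_h^k,b_h^k)\in\mathcal S\times\mathcal A\times\mathcal B$ is realized and then $s_{h+1}^k$ is drawn from $P_h(\cdot\mid s_h^k,a_h^k,b_h^k)$, conditionally independently of the past given $(s_h^k,a_h^k,b_h^k)$. Let $\mathcal F_{k,h}$ denote the $\sigma$-field generated by everything observed before $s_{h+1}^k$ is drawn (all of episodes $1,\dots,k-1$, and in episode $k$ the states $s_1^k,\dots,s_h^k$ and actions up to and including step $h$). Let $P_h^k\in\{0,1\}^{1\times S}$ be the indicator row vector of $s_{h+1}^k$, and $P_{h,s,a,b}=P_h(\cdot\mid s,a,b)\in\mathbb R^{1\times S}$. For $(s,a,b)$, let $N_h^k(s,a,b)$ be the number of episodes $k'\le k$ with $(s_h^{k'},a_h^{k'},b_h^{k'})=(s,a,b)$, and $k_h^n(s,a,b)$ the index of the episode of the $n$-th such visit. Suppose $\{F_{h+1}^k\in\mathbb R^S\}$ and $\{G_h^k(s,a,b,N)\in\mathbb R\}$ (for $k\in[K]$, $h\in[H]$, $(s,a,b)$, $N\in[K]$) satisfy: $F_{h+1}^k$ and $G_h^k(s,a,b,N)$ are $\mathcal F_{k,h}$-measurable; $\|F_{h+1}^k\|_\infty\le C_{\mathrm f}$; $0\le G_h^k(s,a,b,N)\le C_{\mathrm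 g}$; and $0\le \sum_{n=1}^{N_h^k(s,a,b)}G_h^{k_h^n(s,a,b)}(s,a,b,N)\le 2$ for all $k,h,s,a,b,N$, where $C_{\mathrm f},C_{\mathrm g}>0$ are deterministic constants. Define $$X_i(s,a,b,h,N)=G_h^i(s,a,b,N)\,(P_h^i-P_{h,s,a,b})F_{h+1}^i\,\mathbb 1\{(s_h^i,a_h^i,b_h^i)=(s,a,b)\}.$$ Then there is a universal constant $C>0$ such that for any $\delta\in(0,1)$, with probability at least $1-\delta$, simultaneously for all $(k,h,s,a,b,N)\in[K]\times[H]\times\mathcal S\times\mathcal A\times\mathcal B\times[K]$, $$\Big|\sum_{i=1}^kX_i(s,a,b,h,N)\Big|\le C\Bigg[\sqrt{C_{\mathrm g}\log^2\tfrac{SABT}{\delta}}\sqrt{\sum_{n=1}^{N_h^k(s,a,b)}G_h^{k_h^n(s,a,b)}(s,a,b,N)\,\mathsf{Var}_{h,s,a,b}\big(F_{h+1}^{k_h^n(s,a,b)}\big)}+\Big(C_{\mathrm g}C_{\mathrm f}+\sqrt{\tfrac{C_{\mathrm g}}{N}}C_{\mathrm f}\Big)\log^2\tfrac{SABT}{\delta}\Bigg].$$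
   Context: For $V\in\mathbb R^S$, $\mathsf{Var}_{h,s,a,b}(V)=P_{h,s,a,b}(V^2)-(P_{h,s,a,b}V)^2$, where $V^2$ is the entrywise square. $[K]=\{1,\dots,K\}$. *)

From HB Require Import structures.
From mathcomp Require Import all_boot all_order all_algebra.
From mathcomp Require Import reals exp Rstruct.
Set Implicit Arguments. Unset Strict Implicit. Unset Printing Implicit Defensive.
Import Order.TTheory GRing.Theory Num.Theory.
Local Open Scope ring_scope.

Notation RR := Rdefinitions.R.

Section Defs.
Variables (K H : nat) (St Ac Bc : finType).

(* A full outcome of the K-episode process: for each episode k (0-based),
   the states s_1..s_{H+1} (indices 0..H) and the action pairs (a_h,b_h), h=1..H
   (indices 0..H-1). *)
Definition traj := {ffun 'I_K -> {ffun 'I_H.+1 -> St} * {ffun 'I_H -> Ac * Bc}}.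

Definition st_at (w : traj) (k : 'I_K) (h : 'I_H) : St := (w k).1 (widen_ord (leqnSn H) h).
Definition a_at (w : traj) (k : 'I_K) (h : 'I_H) : Ac := ((w k).2 h).1.
Definition b_at (w : traj) (k : 'I_K) (h : 'I_H) : Bc := ((w k).2 h).2.
Definition nxt (w : traj) (k : 'I_K) (h : 'I_H) : St := (w k).1 (lift ord0 h).

(* w and w' coincide on everything observed before s_{h+1}^k is drawn:
   the atoms of the sigma-field F_{k,h}. *)
Definition agreeF (k : 'I_K) (h : 'I_H) (w w' : traj) : bool :=
  [&& [forall k' : 'I_K, (k' < k)%N ==> (w k' == w' k')],
      [forall j : 'I_H.+1, (j <= h)%N ==> ((w k).1 j == (w' k).1 j)] &
      [forall h' : 'I_H, (h' <= h)%N ==> ((w k).2 h' == (w' k).2 h')]].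

Definition visit (w : traj) (k : 'I_K) (h : 'I_H) (s : St) (a : Ac) (b : Bc) : bool :=
  [&& st_at w k h == s, a_at w k h == a & b_at w k h == b].

Variable P : 'I_H -> St -> Ac -> Bc -> St -> RR.

Definition PV (h : 'I_H) s a b (V : St -> RR) : RR := \sum_(s' : St) P h s a b s' * V s'.
Definition Var (h : 'I_H) s a b (V : St -> RR) : RR :=
  PV h s a b (fun x => V x ^+ 2) - (PV h s a b V) ^+ 2.

Variables (F : 'I_K -> 'I_H -> traj -> St -> RR)
          (G : 'I_K -> 'I_H -> St -> Ac -> Bc -> nat -> traj -> RR).

(* sum_{n=1}^{N_h^k(s,a,b)} G_h^{k_h^n}(s,a,b,N): sum over the visiting episodes i <= k *)
Definition Gsum (w : traj) (k : 'I_K) (h : 'I_H) s a b (N : nat) : RR :=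
  \sum_(i : 'I_K | (i <= k)%N && visit w i h s a b) G i h s a b N w.

Definition GVarsum (w : traj) (k : 'I_K) (h : 'I_H) s a b (N : nat) : RR :=
  \sum_(i : 'I_K | (i <= k)%N && visit w i h s a b)
     G i h s a b N w * Var h s a b (F i h w).

Definition Xi (w : traj) (i : 'I_K) (h : 'I_H) s a b (N : nat) : RR :=
  G i h s a b N w * (F i h w (nxt w i h) - PV h s a b (F i h w)) * (visit w i h s a b)%:R.

Definition Xsum (w : traj) (k : 'I_K) (h : 'I_H) s a b (N : nat) : RR :=
  \sum_(i : 'I_K | (i <= k)%N) Xi w i h s a b N.

(* the good event of the theorem, for constant C, bounds Cf Cg and confidence delta;
   N ranges over [K] as N'.+1 with N' : 'I_K *)
Definition good (C Cf Cg delta : RR) (w : traj) : bool :=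
  let L := ln ((#|St| * #|Ac| * #|Bc| * (K * H))%:R / delta) in
  [forall k : 'I_K, forall h : 'I_H, forall s : St, forall a : Ac, forall b : Bc,
   forall N' : 'I_K,
     `|Xsum w k h s a b N'.+1|
       <= C * (Num.sqrt (Cg * L ^+ 2) * Num.sqrt (GVarsum w k h s a b N'.+1)
               + (Cg * Cf + Num.sqrt (Cg / (N'.+1)%:R) * Cf) * L ^+ 2)].

End Defs.

(* Freedman's inequality with peeling.  Fix (h, s, a, b, N), a scale lam > 0 and a sign
   sig = +-1.  Conditionally on F_{i,h} the increment (P_h^i - P_{h,s,a,b}) F_{h+1}^i is
   centred with variance Var_{h,s,a,b}(F_{h+1}^i), and e^y <= 1 + y + 2 y^2 for |y| <= 1/2,
   so exp (sum_i [lam sig X_i - 2 lam^2 G_i^2 Var_i 1{visit}]) is a supermartingale along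
   the episodes once lam <= (4 Cg Cf)^-1.  By Markov's inequality its sum exceeds
   ell = ln (n / delta) with probability at most delta / n; a union bound over the n
   choices of (k, h, s, a, b, N, sig) and of the scales lam_j = (4 Cg Cf 2^j)^-1,
   j <= K, leaves an event of probability >= 1 - delta on which
   sig X <= lam_j q + ell / lam_j for every j, where q = 2 Cg sum G Var.  The smallest
   j with lam_j^2 q <= ell is within a factor 2 of the optimal scale (or j = 0), giving
   |sum X| <= 8 Cg Cf ell + 3 sqrt (ell q); finally n <= (SABT)^3, so ell <= 3 ln (SABT / delta). *)

From Pilot Require Import Defs.
From HB Require Import structures.
From mathcomp Require Import all_boot all_order all_algebra.
From mathcomp Require Import Rstruct reals exp.
From mathcomp Require Import sequences ring lra zify boolp.
Import Order.TTheory GRing.Theory Num.Theory.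
Local Open Scope ring_scope.

Set Implicit Arguments. Unset Strict Implicit. Unset Printing Implicit Defensive.

Section ElementaryBounds.
Variable R : realType.
Implicit Types x l q ell : R.

Lemma expR_le_quadratic x : `|x| <= 1/2 -> expR x <= 1 + x + 2 * x ^+ 2.
Proof.
move=> /ler_normlP [xge xle].
have ex0 := expR_gt0 x.
have ex_1B : expR x * (1 - x) <= 1.
  have := ler_wpM2l (ltW ex0) (expR_ge1Dx (- x)).
  by rewrite expRN mulfV ?gt_eqF // addrC.
set e := expR x in ex0 ex_1B *; nra.
Qed.

Lemma ln_ge_half x : 2 <= x -> 1/2 <= ln x.
Proof.
move=> x2; have x0 : 0 < x by lra.
have xV0 : 0 < x^-1 by rewrite invr_gt0.
have := @le_ln1Dx _ (x^-1 - 1) ltac:(lra).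
rewrite addrC subrK lnV ?posrE // => lnVx.
suff : x^-1 <= 1/2 by lra.
by rewrite -(ler_pM2l x0) mulfV ?gt_eqF //; lra.
Qed.

Lemma ln_le_3ln (n m delta : R) : 0 < n -> n <= m ^+ 3 -> 1 <= m ->
  0 < delta <= 1 -> ln (n / delta) <= 3 * ln (m / delta).
Proof.
move=> n0 nm m1 /andP [d0 d1]; have m0 : 0 < m by lra.
have d3 : delta ^+ 3 <= delta by rewrite !exprS expr0 mulr1; nra.
rewrite -[3]/(3%:R) mulr_natl -lnXn ?divr_gt0 // ler_ln ?posrE ?exprn_gt0 ?divr_gt0 //.
rewrite expr_div_n; apply: (le_trans (ler_wpM2r _ nm)); first by rewrite invr_ge0 ltW.
apply: ler_wpM2l; first by rewrite exprn_ge0 ?ltW.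
by rewrite lef_pV2 ?posrE ?exprn_gt0.
Qed.

(* With [l] within a factor 2 of the optimal [sqrt (ell / q)], the AM-GM
   bound [l q + ell / l] is still of order [sqrt (ell q)]. *)
Lemma balanced_sum_le l q ell : 0 < l -> 0 <= q ->
  l ^+ 2 * q <= ell <= 4 * (l ^+ 2 * q) -> l * q + ell / l <= 3 * Num.sqrt (ell * q).
Proof.
move=> l0 q0 /andP [lo hi]; have ell0 : 0 <= ell by nra.
set y := ell / l.
have yl : y * l = ell by rewrite /y mulfVK ?gt_eqF.
have y0 : 0 <= y by rewrite /y divr_ge0 // ltW.
have hy : y ^+ 2 <= 4 * q * ell.
  rewrite -(ler_pM2r (exprn_gt0 2 l0)) -exprMn yl; nra.
have hx : (l * q) ^+ 2 <= ell * q by rewrite exprMn; nra.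
rewrite -ler_sqr ?nnegrE; last 2 first.
- by rewrite addr_ge0 // mulr_ge0 // ltW.
- by rewrite mulr_ge0 ?sqrtr_ge0.
rewrite exprMn sqr_sqrtr ?mulr_ge0 //.
set x := l * q in hx *; nra.
Qed.

Lemma ln_ratio_ge_half (m : nat) (delta : R) : (2 <= m)%N -> 0 < delta <= 1 ->
  1/2 <= ln (m%:R / delta).
Proof.
move=> m2 /andP [d0 d1]; apply: ln_ge_half.
by rewrite ler_pdivlMr // (@le_trans _ _ 2) ?ler_nat //; lra.
Qed.

Lemma deviation_bound_log2 (Cf Cg ell L U r : R) : 0 < Cf -> 0 < Cg -> 0 <= U -> 0 <= r ->
  0 <= ell <= 3 * L -> 1/2 <= L ->
  2 * (4 * Cg * Cf) * ell + 3 * Num.sqrt (ell * (2 * Cg * U))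
  <= 48 * (Num.sqrt (Cg * L ^+ 2) * Num.sqrt U + (Cg * Cf + r * Cf) * L ^+ 2).
Proof.
move=> /ltW Cf0 /ltW Cg0 U0 r0 /andP [ell0 ellL] L2.
have CU0 : 0 <= Cg * U by rewrite mulr_ge0.
have CC0 : 0 <= Cg * Cf by rewrite mulr_ge0.
have rCL : 0 <= r * Cf * L ^+ 2 by rewrite mulr_ge0 ?sqr_ge0 // mulr_ge0.
have ellL2 : ell <= 6 * L ^+ 2 by nra.
have lin : 2 * (4 * Cg * Cf) * ell <= 48 * (Cg * Cf * L ^+ 2) by nra.
have sq : 3 * Num.sqrt (ell * (2 * Cg * U)) <= 48 * Num.sqrt (Cg * L ^+ 2 * U).
  rewrite -ler_sqr ?nnegrE ?mulr_ge0 ?sqrtr_ge0 //.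
  rewrite !exprMn !sqr_sqrtr ?mulr_ge0 ?sqr_ge0 //; nra.
rewrite -sqrtrM ?mulr_ge0 ?sqr_ge0 //; nra.
Qed.

End ElementaryBounds.

Section Peeling.
Variable R : realType.

Definition peel_scale (c : R) (j : nat) : R := (c * 2 ^+ j)^-1.

Variable c : R.
Hypothesis c0 : 0 < c.

Lemma peel_scale_gt0 j : 0 < peel_scale c j.
Proof. by rewrite invr_gt0 mulr_gt0 ?exprn_gt0. Qed.

Lemma peel_scaleS j : peel_scale c j.+1 * 2 = peel_scale c j.
Proof. by rewrite /peel_scale exprS mulrCA invfM mulrAC mulVf ?mul1r ?pnatr_eq0. Qed.

Lemma peel_scale_le j : peel_scale c j * c <= 1.
Proof.
rewrite ler_pdivrMl ?mulr_gt0 ?exprn_gt0 // mulr1.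
by apply: ler_peMr; [exact: ltW | rewrite exprn_ege1 // ler1n].
Qed.

(* Taking the smallest scale [peel_scale c j] with [scale^2 q <= ell], either
   [j = 0] or the previous scale overshoots, so [j] is balanced. *)
Lemma peeling_bound (K : nat) (ell q x : R) : 0 <= q -> q <= K%:R * c ^+ 2 / 8 ->
  1/8 <= ell ->
  (forall j, (j <= K)%N -> x <= peel_scale c j * q + ell / peel_scale c j) ->
  x <= 2 * c * ell + 3 * Num.sqrt (ell * q).
Proof.
move=> q0 qK ell8 xj.
have ell0 : 0 <= ell by lra.
have rest0 : 0 <= 3 * Num.sqrt (ell * q) by rewrite mulr_ge0 ?sqrtr_ge0.
suff peel : forall j, (j <= K)%N -> peel_scale c j ^+ 2 * q <= ell ->
    x <= 2 * c * ell + 3 * Num.sqrt (ell * q).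
  apply: (peel K (leqnn K)).
  rewrite /peel_scale exprVn ler_pdivrMl; last by rewrite exprn_gt0 ?mulr_gt0 ?exprn_gt0.
  apply: (le_trans qK); rewrite exprMn.
  have K4 : K%:R <= (2 ^+ K) ^+ 2 :> R.
    rewrite -!natrX ler_nat -expnM (leq_trans (ltnW (ltn_expl K (isT : (1 < 2)%N)))) //.
    by rewrite leq_exp2l // leq_pmulr.
  have c2 : 0 < c ^+ 2 by rewrite exprn_gt0.
  set t := (2 : R) ^+ K ^+ 2 in K4 *.
  have ct : 0 <= c ^+ 2 * t.
    by apply: mulr_ge0; [exact: ltW | exact: le_trans (ler0n _ K) K4].
  nra.
elim=> [|j IH] jK hj.
  have := xj 0%N jK; rewrite /peel_scale expr0 mulr1 invrK.
  rewrite /peel_scale expr0 mulr1 exprVn ler_pdivrMl ?exprn_gt0 // in hj.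
  move=> hx; apply: (le_trans hx); rewrite -mulrA [2 * _]mulrC.
  suff : c^-1 * q <= c * ell by lra.
  by rewrite -(ler_pM2l c0) mulrA mulfV ?gt_eqF // mul1r mulrA -expr2.
have [hj'|hj'] := lerP (peel_scale c j ^+ 2 * q) ell; first exact: IH (ltnW jK) hj'.
apply: (le_trans (xj _ jK)); rewrite -[X in X <= _]add0r.
apply: lerD; first by rewrite !mulr_ge0 // ltW.
apply: balanced_sum_le; rewrite ?peel_scale_gt0 // hj /=.
rewrite -peel_scaleS exprMn mulrAC [_ * 2 ^+ 2]mulrC expr2 in hj'.
set u := peel_scale c j.+1 ^+ 2 * q in hj' *; lra.
Qed.

End Peeling.

Section Variance.
Variables (H : nat) (St Ac Bc : finType).
Variable P : 'I_H -> St -> Ac -> Bc -> St -> RR.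
Hypothesis P0 : forall h s a b s', 0 <= P h s a b s'.
Hypothesis P1 : forall h s a b, \sum_(s' : St) P h s a b s' = 1.
Variables (h : 'I_H) (s : St) (a : Ac) (b : Bc).
Local Notation PV := (PV P h s a b).
Local Notation Var := (Var P h s a b).

Lemma PV_affine (c0 c1 c2 : RR) (f g : St -> RR) :
  PV (fun x => c0 + c1 * f x + c2 * g x) = c0 + c1 * PV f + c2 * PV g.
Proof.
rewrite /Defs.PV -[c0 in RHS]mulr1 -(P1 h s a b) !mulr_sumr -!big_split /=.
by apply: eq_bigr => x _; ring.
Qed.

Lemma PV_centered (f : St -> RR) : PV (fun x => f x - PV f) = 0.
Proof.
rewrite (_ : (fun x => _) = fun x => - PV f + 1 * f x + 0 * f x); last first.
  by apply: funext => x; ring.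
by rewrite PV_affine; ring.
Qed.

Lemma Var_centered (f : St -> RR) : Var f = PV (fun x => (f x - PV f) ^+ 2).
Proof.
rewrite (_ : (fun x => _) = fun x => PV f ^+ 2 + (- 2 * PV f) * f x + 1 * f x ^+ 2).
  by rewrite PV_affine /Defs.Var; ring.
by apply: funext => x; ring.
Qed.

Lemma Var_ge0 (f : St -> RR) : 0 <= Var f.
Proof. by rewrite Var_centered; apply: sumr_ge0 => x _; rewrite mulr_ge0 ?sqr_ge0. Qed.

Lemma PV_le (f g : St -> RR) : (forall x, f x <= g x) -> PV f <= PV g.
Proof. by move=> fg; apply: ler_sum => x _; rewrite ler_wpM2l. Qed.

Lemma normr_PV_le (f : St -> RR) (C : RR) : (forall x, `|f x| <= C) -> `|PV f| <= C.
Proof.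
move=> fC; apply: (le_trans (ler_norm_sum _ _ _)).
have -> : C = PV (fun => C) by rewrite /Defs.PV -mulr_suml P1 mul1r.
by apply: ler_sum => x _; rewrite normrM ger0_norm ?ler_wpM2l.
Qed.

Lemma Var_le_sqr (f : St -> RR) (C : RR) : (forall x, `|f x| <= C) -> Var f <= C ^+ 2.
Proof.
move=> fC; have PV0 := sqr_ge0 (PV f).
suff : PV (fun x => f x ^+ 2) <= C ^+ 2 by rewrite /Defs.Var; lra.
have -> : C ^+ 2 = PV (fun => C ^+ 2) by rewrite /Defs.PV -mulr_suml P1 mul1r.
by apply: PV_le => x; have /ler_normlP [lo hi] := fC x; nra.
Qed.

(* Bernstein's moment generating function bound: [e^y <= 1 + y + 2 y^2] for
   [|y| <= 1/2], the centred term has mean 0, and [1 + 2 t^2 Var <= e^(2 t^2 Var)]. *)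
Lemma PV_expR_centered_le1 (f : St -> RR) (t : RR) :
  (forall x, `|t * (f x - PV f)| <= 1/2) ->
  PV (fun x => expR (t * (f x - PV f) - 2 * t ^+ 2 * Var f)) <= 1.
Proof.
move=> small; set v := 2 * t ^+ 2 * Var f.
apply: (@le_trans _ _ (PV (fun x => expR (- v) + (t * expR (- v)) * (f x - PV f)
    + (2 * t ^+ 2 * expR (- v)) * (f x - PV f) ^+ 2))).
  apply: PV_le => x; rewrite expRD.
  have := ler_wpM2r (ltW (expR_gt0 (- v))) (expR_le_quadratic (small x)).
  by rewrite exprMn; lra.
rewrite PV_affine PV_centered -Var_centered mulr0 addr0 -/v.
have := expR_ge1Dx v; have := expRxMexpNx_1 v; have := expR_gt0 (- v).
rewrite /v; set e := expR (- _); set E := expR _; nra.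
Qed.

End Variance.

Section Filtration.
Variables (K H : nat) (St Ac Bc : finType).
Local Notation traj := (traj K H St Ac Bc).
Implicit Types (k : 'I_K) (h : 'I_H) (w : traj).

Lemma agreeFP k h w w' :
  reflect [/\ forall k' : 'I_K, (k' < k)%N -> w k' = w' k',
              forall j : 'I_H.+1, (j <= h)%N -> (w k).1 j = (w' k).1 j &
              forall h' : 'I_H, (h' <= h)%N -> (w k).2 h' = (w' k).2 h']
          (agreeF k h w w').
Proof.
apply: (iffP and3P) => [[/forallP e1 /forallP e2 /forallP e3]|[e1 e2 e3]].
  by split=> [k'|j|h'] /[dup] lt; [move: (e1 k') | move: (e2 j) | move: (e3 h')];
     rewrite lt => /eqP.
by split; apply/forallP => i; apply/implyP => lt; apply/eqP; [apply: e1|apply: e2|apply: e3].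
Qed.

Lemma agreeF_refl k h w : agreeF k h w w.
Proof. exact/agreeFP. Qed.

Lemma agreeF_sym k h w w' : agreeF k h w w' -> agreeF k h w' w.
Proof. by move/agreeFP => [e1 e2 e3]; apply/agreeFP; split=> *; rewrite (e1, e2, e3). Qed.

Lemma agreeF_trans k h w1 w2 w3 :
  agreeF k h w1 w2 -> agreeF k h w2 w3 -> agreeF k h w1 w3.
Proof.
move/agreeFP => [e1 e2 e3] /agreeFP [f1 f2 f3]; apply/agreeFP.
by split=> *; [rewrite e1 ?f1 | rewrite e2 ?f2 | rewrite e3 ?f3].
Qed.

Lemma agreeF_prev k h w w' (i : 'I_K) : agreeF k h w w' -> (i < k)%N -> w i = w' i.
Proof. by move/agreeFP => [e1 _ _]; apply: e1. Qed.

Lemma agreeF_of_prefix k h w w' :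
  (forall k' : 'I_K, (k' <= k)%N -> w k' = w' k') -> agreeF k h w w'.
Proof.
move=> e; apply/agreeFP; split=> [k' lt|j _|h' _]; last 2 first.
- by rewrite e.
- by rewrite e.
by apply: e; apply: ltnW.
Qed.

Lemma agreeF_sab k h w w' : agreeF k h w w' ->
  [/\ st_at w k h = st_at w' k h, a_at w k h = a_at w' k h & b_at w k h = b_at w' k h].
Proof. by move/agreeFP => [_ e2 e3]; rewrite /st_at /a_at /b_at e2 ?e3. Qed.

Lemma agreeF_visit k h w w' s a b : agreeF k h w w' ->
  visit w k h s a b = visit w' k h s a b.
Proof. by case/agreeF_sab => e1 e2 e3; rewrite /visit e1 e2 e3. Qed.

Definition atom_size k h w : nat := #|[pred w' | agreeF k h w w']|.

Lemma atom_size_eq k h w w' : agreeF k h w w' -> atom_size k h w = atom_size k h w'.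
Proof.
move=> e; apply: eq_card => x /=; apply/idP/idP.
- exact: agreeF_trans (agreeF_sym e).
- exact: agreeF_trans e.
Qed.

Lemma atom_size_gt0 k h w : (0 < atom_size k h w)%N.
Proof. by apply/card_gt0P; exists w; rewrite inE /= agreeF_refl. Qed.

Lemma sum_atom_average k h (r psi : traj -> RR) :
  (forall w w', agreeF k h w w' -> psi w = psi w') ->
  \sum_w (\sum_(w' | agreeF k h w w') r w') * psi w / (atom_size k h w)%:R
  = \sum_w r w * psi w.
Proof.
move=> psiF.
under eq_bigr => w _ do rewrite !mulr_suml big_mkcond /=.
rewrite exchange_big /=; apply: eq_bigr => w' _.
transitivity (\sum_(w | agreeF k h w' w) r w' * psi w' / (atom_size k h w')%:R).
  rewrite [RHS]big_mkcond /=; apply: eq_bigr => w _.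
  have [e|ne] := boolP (agreeF k h w w').
    by rewrite (agreeF_sym e) (psiF _ _ e) (atom_size_eq e).
  by case: ifP => // /agreeF_sym e; rewrite e in ne.
rewrite sumr_const -[_ *+ _]mulr_natr mulfVK // pnatr_eq0 -lt0n.
exact: atom_size_gt0.
Qed.

Variables (P : 'I_H -> St -> Ac -> Bc -> St -> RR) (p : traj -> RR).
Hypothesis markov : forall k h w (s' : St),
  \sum_(w' | agreeF k h w w' && (nxt w' k h == s')) p w'
  = P h (st_at w k h) (a_at w k h) (b_at w k h) s' * \sum_(w' | agreeF k h w w') p w'.

Definition Pnext k h w (s' : St) : RR := P h (st_at w k h) (a_at w k h) (b_at w k h) s'.

Lemma sum_nxt_eq k h (s' : St) (psi : traj -> RR) :
  (forall w w', agreeF k h w w' -> psi w = psi w') ->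
  \sum_w p w * (nxt w k h == s')%:R * psi w = \sum_w p w * Pnext k h w s' * psi w.
Proof.
move=> psiF; rewrite -(sum_atom_average _ psiF).
have PpsiF w w' : agreeF k h w w' -> Pnext k h w s' * psi w = Pnext k h w' s' * psi w'.
  by move=> e; rewrite (psiF _ _ e) /Pnext; case: (agreeF_sab e) => -> -> ->.
under [RHS]eq_bigr do rewrite -mulrA.
rewrite -(sum_atom_average _ PpsiF); apply: eq_bigr => w _.
have -> : \sum_(w' | agreeF k h w w') p w' * (nxt w' k h == s')%:R
    = \sum_(w' | agreeF k h w w' && (nxt w' k h == s')) p w'.
  by rewrite [RHS]big_mkcondr; apply: eq_bigr => w' _; case: eqP; rewrite ?mulr1 ?mulr0.
by rewrite markov /Pnext; ring.
Qed.

Lemma tower_nxt k h (g : traj -> RR) (phi : traj -> St -> RR) :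
  (forall w w', agreeF k h w w' -> g w = g w') ->
  (forall w w' s', agreeF k h w w' -> phi w s' = phi w' s') ->
  \sum_w p w * (g w * phi w (nxt w k h))
  = \sum_w p w * (g w * \sum_s' Pnext k h w s' * phi w s').
Proof.
move=> gF phiF.
have pick w : p w * (g w * phi w (nxt w k h))
    = \sum_s' p w * (nxt w k h == s')%:R * (g w * phi w s').
  rewrite (bigD1 (nxt w k h)) //= eqxx mulr1 big1 ?addr0 // => s' ne.
  by rewrite eq_sym (negbTE ne) mulr0 mul0r.
under eq_bigr => w _ do rewrite pick.
rewrite exchange_big /=.
transitivity (\sum_s' \sum_w p w * Pnext k h w s' * (g w * phi w s')).
  apply: eq_bigr => s' _; apply: sum_nxt_eq => w w' e.
  by rewrite (gF _ _ e) (phiF _ _ _ e).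
rewrite exchange_big /=; apply: eq_bigr => w _.
by rewrite !mulr_sumr; apply: eq_bigr => s' _; ring.
Qed.

End Filtration.

Section Deviation.
Variables (K H : nat) (St Ac Bc : finType).
Local Notation traj := (traj K H St Ac Bc).
Variable P : 'I_H -> St -> Ac -> Bc -> St -> RR.
Hypothesis P0 : forall h s a b s', 0 <= P h s a b s'.
Hypothesis P1 : forall h s a b, \sum_(s' : St) P h s a b s' = 1.
Variables (Cf Cg : RR) (F : 'I_K -> 'I_H -> traj -> St -> RR)
          (G : 'I_K -> 'I_H -> St -> Ac -> Bc -> nat -> traj -> RR).
Hypothesis Fb : forall k h w s', `|F k h w s'| <= Cf.
Hypothesis Gb : forall k h s a b N w, (1 <= N <= K)%N -> 0 <= G k h s a b N w <= Cg.
Variables (h : 'I_H) (s : St) (a : Ac) (b : Bc) (N : nat).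
Hypothesis hN : (1 <= N <= K)%N.

Definition Wvar (i : 'I_K) (w : traj) : RR :=
  G i h s a b N w ^+ 2 * Var P h s a b (F i h w) * (visit w i h s a b)%:R.

(* The exponent of Freedman's exponential supermartingale, at scale [lam] and sign [sig]. *)
Definition Zinc (lam sig : RR) (i : 'I_K) (w : traj) : RR :=
  lam * sig * Xi P F G w i h s a b N - 2 * lam ^+ 2 * Wvar i w.

Lemma sum_Zinc lam sig (k : 'I_K) w :
  \sum_(i : 'I_K | (i < k.+1)%N) Zinc lam sig i w
  = lam * sig * Xsum P F G w k h s a b N - 2 * lam ^+ 2 * \sum_(i : 'I_K | (i <= k)%N) Wvar i w.
Proof. by rewrite big_split /= sumrN -!mulr_sumr. Qed.

Lemma GVarsum_ge0 (k : 'I_K) w : 0 <= GVarsum P F G w k h s a b N.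
Proof.
apply: sumr_ge0 => i _; have /andP [G0 _] := Gb i h s a b w hN.
by rewrite mulr_ge0 ?Var_ge0.
Qed.

Lemma sum_Wvar_le (k : 'I_K) w :
  \sum_(i : 'I_K | (i <= k)%N) Wvar i w <= Cg * GVarsum P F G w k h s a b N.
Proof.
rewrite /GVarsum big_mkcondr mulr_sumr /=; apply: ler_sum => i _.
rewrite /Wvar; case: (visit w i h s a b); last by rewrite mulr0n !mulr0.
have /andP [G0 G1] := Gb i h s a b w hN.
have V0 := Var_ge0 P0 P1 h s a b (F i h w).
by rewrite mulr1 expr2 -!mulrA ler_wpM2r ?mulr_ge0.
Qed.

Lemma GVarsum_le (k : 'I_K) w : GVarsum P F G w k h s a b N <= K%:R * (Cg * Cf ^+ 2).
Proof.
apply: (@le_trans _ _ (\sum_(i : 'I_K) Cg * Cf ^+ 2)); last first.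
  by rewrite sumr_const card_ord mulr_natl.
rewrite /GVarsum big_mkcond /=; apply: ler_sum => i _.
have /andP [G0 G1] := Gb i h s a b w hN.
have Cg0 := le_trans G0 G1.
case: ifP => _; last by rewrite mulr_ge0 ?sqr_ge0.
by apply: ler_pM; rewrite ?Var_ge0 ?(Var_le_sqr P0 P1).
Qed.

Section Supermartingale.
Variable p : traj -> RR.
Hypothesis p0 : forall w, 0 <= p w.
Hypothesis psum : \sum_w p w = 1.
Hypothesis markov : forall (k : 'I_K) (h : 'I_H) w (s' : St),
  \sum_(w' | agreeF k h w w' && (nxt w' k h == s')) p w'
  = P h (st_at w k h) (a_at w k h) (b_at w k h) s' * \sum_(w' | agreeF k h w w') p w'.
Hypothesis Fmeas : forall k h w w' s', agreeF k h w w' -> F k h w s' = F k h w' s'.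
Hypothesis Gmeas : forall k h s a b N w w',
  agreeF k h w w' -> G k h s a b N w = G k h s a b N w'.
Variables (lam sig : RR).
Hypothesis lam0 : 0 <= lam.
Hypothesis lam_small : lam * (4 * Cg * Cf) <= 1.
Hypothesis sig2 : sig ^+ 2 = 1.

Lemma F_meas (k : 'I_K) (h' : 'I_H) w w' : agreeF k h' w w' -> F k h' w = F k h' w'.
Proof. by move=> e; apply: funext => s'; apply: Fmeas. Qed.

Lemma Zinc_prefix (i : 'I_K) (w w' : traj) :
  (forall k' : 'I_K, (k' <= i)%N -> w k' = w' k') -> Zinc lam sig i w = Zinc lam sig i w'.
Proof.
move=> e; have A := agreeF_of_prefix h e.
rewrite /Zinc /Wvar /Xi (Gmeas s a b N A) (F_meas A) (agreeF_visit _ _ _ A).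
by rewrite /nxt (e i (leqnn _)).
Qed.

Lemma Pnext_expR_Zinc_le1 (i : 'I_K) w :
  \sum_s' Pnext P i h w s' * expR (lam * sig * (G i h s a b N w
      * (F i h w s' - PV P h s a b (F i h w)) * (visit w i h s a b)%:R)
      - 2 * lam ^+ 2 * Wvar i w) <= 1.
Proof.
rewrite /Wvar; case V: (visit w i h s a b); last first.
  under eq_bigr do rewrite !mulr0 subr0 expR0 mulr1.
  by rewrite /Pnext P1.
move: V => /and3P [/eqP Es /eqP Ea /eqP Eb].
have /andP [G0 G1] := Gb i h s a b w hN.
set t := lam * sig * G i h s a b N w.
have -> : 2 * lam ^+ 2 * (G i h s a b N w ^+ 2 * Var P h s a b (F i h w) * 1%:R)
    = 2 * t ^+ 2 * Var P h s a b (F i h w) by rewrite /t !exprMn sig2; ring.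
rewrite /Pnext Es Ea Eb.
under eq_bigr do rewrite mulr1 mulrA -/t.
apply: (PV_expR_centered_le1 P0 P1) => x.
have dev : `|F i h w x - PV P h s a b (F i h w)| <= 2 * Cf.
  apply: (le_trans (ler_normB _ _)).
  have := lerD (Fb i h w x) (normr_PV_le P0 P1 h s a b (Fb i h w)); lra.
have sig1 : `|sig| = 1.
  by apply/eqP; rewrite -sqrp_eq1 ?normr_ge0 // -normrX sig2 normr1.
rewrite /t !normrM (ger0_norm lam0) (ger0_norm G0) sig1 mulr1.
apply: (@le_trans _ _ (lam * Cg * (2 * Cf))).
  by apply: ler_pM; rewrite ?mulr_ge0 ?normr_ge0 ?ler_wpM2l.
have E : 2 * (lam * Cg * (2 * Cf)) = lam * (4 * Cg * Cf) by ring.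
by move: lam_small; rewrite -E; lra.
Qed.

Lemma sum_expR_Zinc_le1 m : \sum_w p w * expR (\sum_(i : 'I_K | (i < m)%N) Zinc lam sig i w) <= 1.
Proof.
elim: m => [|m IH].
  by under eq_bigr do rewrite big_pred0 // expR0 mulr1; rewrite psum.
have [mK|Km] := ltnP m K; last first.
  apply: le_trans IH; rewrite le_eqVlt; apply/orP; left; apply/eqP.
  apply: eq_bigr => w _; congr (_ * expR _); apply: eq_bigl => i.
  by rewrite (leq_trans (ltn_ord i) Km) (ltn_trans (ltn_ord i)) // (leq_ltn_trans Km).
set i0 := Ordinal mK.
have Zsplit w : \sum_(i : 'I_K | (i < m.+1)%N) Zinc lam sig i w
    = Zinc lam sig i0 w + \sum_(i : 'I_K | (i < m)%N) Zinc lam sig i w.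
  by rewrite (bigD1 i0) //=; congr (_ + _); apply: eq_bigl => i; rewrite ltnS ltn_neqAle andbC.
pose g w := expR (\sum_(i : 'I_K | (i < m)%N) Zinc lam sig i w).
pose phi w s' := expR (lam * sig * (G i0 h s a b N w
  * (F i0 h w s' - PV P h s a b (F i0 h w)) * (visit w i0 h s a b)%:R) - 2 * lam ^+ 2 * Wvar i0 w).
under eq_bigr => w _ do rewrite Zsplit expRD [expR _ * _]mulrC -/(g w) -/(phi w (nxt w i0 h)).
(* Only the state s_{h+1}^{i0} in the last factor is random given F_{i0,h}. *)
rewrite (tower_nxt markov); first last.
- move=> w w' s' e; rewrite /phi /Wvar (Gmeas s a b N e) (F_meas e).
  by rewrite (agreeF_visit _ _ _ e).
- move=> w w' e; rewrite /g; congr expR; apply: eq_bigr => i lt.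
  apply: Zinc_prefix => k' le; apply: (agreeF_prev e).
  exact: leq_ltn_trans le lt.
apply: le_trans IH; apply: ler_sum => w _; apply: ler_wpM2l => //.
by rewrite -[X in _ <= X]mulr1 ler_wpM2l ?expR_ge0 ?Pnext_expR_Zinc_le1.
Qed.

End Supermartingale.

Lemma Xsum_le_of_Zsum (ell : RR) (k : 'I_K) w : 0 < Cf -> 0 < Cg -> 1/8 <= ell ->
  (forall (j : nat) (sg : bool), (j <= K)%N ->
     \sum_(i : 'I_K | (i < k.+1)%N) Zinc (peel_scale (4 * Cg * Cf) j) ((-1) ^+ sg) i w <= ell) ->
  `|Xsum P F G w k h s a b N|
    <= 2 * (4 * Cg * Cf) * ell + 3 * Num.sqrt (ell * (2 * Cg * GVarsum P F G w k h s a b N)).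
Proof.
move=> Cf0 Cg0 ell8 Zle; set U := GVarsum P F G w k h s a b N.
have c0 : 0 < 4 * Cg * Cf by rewrite !mulr_gt0.
have U0 : 0 <= U := GVarsum_ge0 k w.
have q0 : 0 <= 2 * Cg * U by rewrite !mulr_ge0 // ltW.
have qK : 2 * Cg * U <= K%:R * (4 * Cg * Cf) ^+ 2 / 8.
  rewrite (_ : _ / 8 = 2 * Cg * (K%:R * (Cg * Cf ^+ 2))); last by field.
  by rewrite ler_wpM2l ?GVarsum_le // mulr_ge0 // ltW.
suff sgn_bound (sg : bool) : (-1) ^+ sg * Xsum P F G w k h s a b N
    <= 2 * (4 * Cg * Cf) * ell + 3 * Num.sqrt (ell * (2 * Cg * U)).
  by apply/ler_normlP; split; [move: (sgn_bound true) | move: (sgn_bound false)];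
    rewrite ?expr1 ?expr0 ?mulN1r ?mul1r.
apply: (peeling_bound c0 q0 qK ell8) => j jK.
have l0 := peel_scale_gt0 c0 j; set l := peel_scale _ j in l0 *.
rewrite -(ler_pM2l l0) mulrDr (mulrCA l ell) mulfV ?gt_eqF // mulr1.
have := Zle j sg jK; rewrite sum_Zinc -/U -/l.
have := ler_wpM2l (mulr_ge0 (ler0n _ 2) (sqr_ge0 l)) (sum_Wvar_le k w).
rewrite -/U; set V := \sum_(i : 'I_K | _) _; set X := Xsum P F G w k h s a b N.
have E1 : l * ((-1) ^+ sg * X) = l * (-1) ^+ sg * X by ring.
have E2 : l * (l * (2 * Cg * U)) = 2 * l ^+ 2 * (Cg * U) by ring.
lra.
Qed.

End Deviation.

Lemma sum_indicator_gt_le_expR (R : realType) (T : finType) (p Z : T -> R) (ell : R) :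
  (forall w, 0 <= p w) -> \sum_w p w * expR (Z w) <= 1 ->
  \sum_w p w * (ell < Z w)%R%:R <= expR (- ell).
Proof.
move=> p0 EZ; apply: (@le_trans _ _ (\sum_w p w * expR (Z w) * expR (- ell))).
  apply: ler_sum => w _; rewrite -mulrA ler_wpM2l // -expRD.
  case: ltrP => [lt|_]; last by rewrite expR_ge0.
  by rewrite (le_trans _ (expR_ge1Dx _)) // lerDl subr_ge0 ltW.
by rewrite -mulr_suml ler_piMl ?expR_ge0.
Qed.

Lemma sum_compl_le_union (R : numDomainType) (T I : finType) (p : T -> R)
    (E : pred T) (bad : I -> pred T) :
  (forall w, 0 <= p w) -> (forall w, (forall i, ~~ bad i w) -> E w) ->
  \sum_(w | ~~ E w) p w <= \sum_i \sum_w p w * (bad i w)%:R.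
Proof.
move=> p0 Ebad; rewrite exchange_big big_mkcond /=; apply: ler_sum => w _.
have term0 i : 0 <= p w * (bad i w)%:R by rewrite mulr_ge0.
case: ifP => // /negP nE; last by rewrite sumr_ge0.
have [i bi] : exists i, bad i w.
  by apply/existsP; apply: contraT => /existsPn nb; case: nE; apply: Ebad => i; apply: nb.
by rewrite (bigD1 i) //= bi mulr1 lerDl sumr_ge0.
Qed.

Lemma card_index_le (S A B K H : nat) : (2 <= S)%N -> (2 <= A)%N -> (2 <= B)%N ->
  (2 <= K * H)%N -> (K * H * S * A * B * K * 2 * K.+1 <= (S * A * B * (K * H)) ^ 3)%N.
Proof.
move=> S2 A2 B2 T2.
have H1 : (1 <= H)%N by case: H T2 => [|H'] //; rewrite muln0.
have KT : (K <= K * H)%N by rewrite leq_pmulr.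
have X8 : (8 <= S * A * B)%N by rewrite (_ : 8 = 2 * 2 * 2)%N // !leq_mul.
set X := (S * A * B)%N in X8 *; set T := (K * H)%N in KT T2 *.
rewrite (_ : T * S * A * B * K * 2 * K.+1 = X * T * (2 * K * K.+1))%N; last by rewrite /X /T; ring.
rewrite expnS expnS expn1 leq_mul2l; apply/orP; right.
have TT : (K * K <= T * T)%N by rewrite leq_mul.
apply: (@leq_trans (4 * (T * T))); first by nia.
by rewrite (_ : X * T * (X * T) = X * X * (T * T))%N ?leq_mul //; [nia | ring].
Qed.

Section GoodEvent.
Variables (K H : nat) (St Ac Bc : finType).
Local Notation traj := (traj K H St Ac Bc).
Variable P : 'I_H -> St -> Ac -> Bc -> St -> RR.
Hypothesis P0 : forall h s a b s', 0 <= P h s a b s'.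
Hypothesis P1 : forall h s a b, \sum_(s' : St) P h s a b s' = 1.
Variables (Cf Cg : RR) (F : 'I_K -> 'I_H -> traj -> St -> RR)
          (G : 'I_K -> 'I_H -> St -> Ac -> Bc -> nat -> traj -> RR).
Hypothesis Cf0 : 0 < Cf.
Hypothesis Cg0 : 0 < Cg.
Hypothesis Fb : forall k h w s', `|F k h w s'| <= Cf.
Hypothesis Gb : forall k h s a b N w, (1 <= N <= K)%N -> 0 <= G k h s a b N w <= Cg.

(* episode, step, state, actions, [N - 1], sign and peeling level *)
Definition deviation_index := ('I_K * 'I_H * St * Ac * Bc * 'I_K * bool * 'I_K.+1)%type.

Definition large_deviation (ell : RR) (ix : deviation_index) (w : traj) : bool :=
  let: (k, h, s, a, b, N', sg, j) := ix in
  ell < \sum_(i : 'I_K | (i < k.+1)%N)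
          Zinc P F G h s a b N'.+1 (peel_scale (4 * Cg * Cf) j) ((-1) ^+ sg) i w.

Lemma good_of_no_large_deviation (delta ell : RR) w :
  let L := ln ((#|St| * #|Ac| * #|Bc| * (K * H))%:R / delta) in
  1/2 <= L -> 1/8 <= ell <= 3 * L ->
  (forall ix, ~~ large_deviation ell ix w) -> good P F G 48 Cf Cg delta w.
Proof.
move=> L L2 /andP [ell8 ellL] small.
apply/forallP => k; apply/forallP => h; apply/forallP => s; apply/forallP => a.
apply/forallP => b; apply/forallP => N'; rewrite -/L.
have hN : (1 <= N'.+1 <= K)%N by rewrite /= ltn_ord.
apply: le_trans (Xsum_le_of_Zsum P0 P1 Fb Gb hN Cf0 Cg0 ell8 _) _.
  move=> j sg jK; rewrite leNgt; exact: (small (k, h, s, a, b, N', sg, Ordinal (jK : (j < K.+1)%N))).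
apply: deviation_bound_log2; rewrite ?sqrtr_ge0 ?(GVarsum_ge0 P0 P1 F Gb _ _ _ _ hN) //.
by rewrite ellL andbT; lra.
Qed.

Variable p : traj -> RR.
Hypothesis p0 : forall w, 0 <= p w.
Hypothesis psum : \sum_w p w = 1.
Hypothesis markov : forall (k : 'I_K) (h : 'I_H) w (s' : St),
  \sum_(w' | agreeF k h w w' && (nxt w' k h == s')) p w'
  = P h (st_at w k h) (a_at w k h) (b_at w k h) s' * \sum_(w' | agreeF k h w w') p w'.
Hypothesis Fmeas : forall k h w w' s', agreeF k h w w' -> F k h w s' = F k h w' s'.
Hypothesis Gmeas : forall k h s a b N w w',
  agreeF k h w w' -> G k h s a b N w = G k h s a b N w'.

Lemma large_deviation_prob ell ix :
  \sum_w p w * (large_deviation ell ix w)%:R <= expR (- ell).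
Proof.
case: ix => [[[[[[[k h] s] a] b] N'] sg] j].
have hN : (1 <= N'.+1 <= K)%N by rewrite /= ltn_ord.
have c0 : 0 < 4 * Cg * Cf by rewrite !mulr_gt0.
apply: sum_indicator_gt_le_expR => //.
apply: (sum_expR_Zinc_le1 P0 P1 Fb Gb _ _ _ _ hN p0 psum markov Fmeas Gmeas).
- exact/ltW/peel_scale_gt0.
- exact: peel_scale_le.
- exact: sqrr_sign.
Qed.

End GoodEvent.

Theorem mainTheorem2 :
  exists C : RR, 0 < C /\
  forall (K H : nat) (St Ac Bc : finType),
    (2 <= #|St|)%N -> (2 <= #|Ac|)%N -> (2 <= #|Bc|)%N -> (2 <= K * H)%N ->
  forall (P : 'I_H -> St -> Ac -> Bc -> St -> RR),
    (forall h s a b s', 0 <= P h s a b s') ->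
    (forall h s a b, \sum_(s' : St) P h s a b s' = 1) ->
  forall (p : traj K H St Ac Bc -> RR),
    (forall w, 0 <= p w) ->
    \sum_(w : traj K H St Ac Bc) p w = 1 ->
    (* Markov property: Pr(s_{h+1}^k = s' | F_{k,h}) = P_h(s' | s_h^k, a_h^k, b_h^k) *)
    (forall (k : 'I_K) (h : 'I_H) (w : traj K H St Ac Bc) (s' : St),
       \sum_(w' | agreeF k h w w' && (nxt w' k h == s')) p w'
       = P h (st_at w k h) (a_at w k h) (b_at w k h) s'
         * \sum_(w' | agreeF k h w w') p w') ->
  forall (Cf Cg : RR), 0 < Cf -> 0 < Cg ->
  forall (F : 'I_K -> 'I_H -> traj K H St Ac Bc -> St -> RR)
         (G : 'I_K -> 'I_H -> St -> Ac -> Bc -> nat -> traj K H St Ac Bc -> RR),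
    (* F_{h+1}^k and G_h^k(s,a,b,N) are F_{k,h}-measurable *)
    (forall k h w w' s', agreeF k h w w' -> F k h w s' = F k h w' s') ->
    (forall k h s a b N w w', agreeF k h w w' -> G k h s a b N w = G k h s a b N w') ->
    (forall k h w s', `|F k h w s'| <= Cf) ->
    (forall k h s a b N w, (1 <= N <= K)%N -> 0 <= G k h s a b N w <= Cg) ->
    (forall k h s a b N w, (1 <= N <= K)%N ->
       0 <= Gsum G w k h s a b N <= 2) ->
  forall delta : RR, 0 < delta < 1 ->
    1 - delta <= \sum_(w | good P F G C Cf Cg delta w) p w.
Proof.
exists 48; split; first by rewrite ltr0n.
move=> K H St Ac Bc S2 A2 B2 T2 P P0 P1 p p0 psum markov Cf Cg Cf0 Cg0 F G
  Fmeas Gmeas Fb Gb _ delta /andP [d0 d1].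
have d01 : 0 < delta <= 1 by rewrite d0 ltW.
pose m := (#|St| * #|Ac| * #|Bc| * (K * H))%N.
pose n := #|{: deviation_index K H St Ac Bc}|.
have nm : (n <= m ^ 3)%N.
  by rewrite /n !card_prod !card_ord card_bool card_index_le.
have n2 : (2 <= n)%N.
  rewrite /n !card_prod !card_ord card_bool; nia.
pose ell := ln (n%:R / delta).
have L2 : 1/2 <= ln (m%:R / delta) by apply: ln_ratio_ge_half; rewrite // /m; nia.
have ell2 : 1/2 <= ell := ln_ratio_ge_half n2 d01.
have ellL : ell <= 3 * ln (m%:R / delta).
  by apply: ln_le_3ln; rewrite ?ltr0n ?ler1n ?(leq_trans _ n2) -?natrX ?ler_nat // /m; nia.
have deviation_prob ix : \sum_w p w * (large_deviation P Cf Cg F G ell ix w)%:R <= delta / n%:R.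
  rewrite (le_trans (large_deviation_prob P0 P1 Cf0 Cg0 Fb Gb p0 psum markov Fmeas Gmeas _ _)) //.
  by rewrite expRN lnK ?posrE ?divr_gt0 ?ltr0n ?(leq_trans _ n2) // invf_div.
have ell_ok : 1/8 <= ell <= 3 * ln (m%:R / delta) by rewrite ellL andbT; lra.
have good_of w : (forall ix, ~~ large_deviation P Cf Cg F G ell ix w) ->
    good P F G 48 Cf Cg delta w := good_of_no_large_deviation P0 P1 Cf0 Cg0 Fb Gb L2 ell_ok.
have union := sum_compl_le_union p0 good_of.
have : \sum_(w | ~~ good P F G 48 Cf Cg delta w) p w <= delta.
  apply: (le_trans union); apply: (le_trans (ler_sum _ (fun ix _ => deviation_prob ix))).
  by rewrite sumr_const -/n -[_ *+ n]mulr_natr divfK // pnatr_eq0 -lt0n (leq_trans _ n2).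
by rewrite (bigID (good P F G 48 Cf Cg delta)) /= in psum; lra.
Qed.
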